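(* For all logarithmic hypermonomials $\mathfrak{m},\mathfrak{n}\in\mathfrak{L}$: (i) $(\mathfrak{m}\mathfrak{n})^\dagger=\mathfrak{m}^\dagger+\mathfrak{n}^\dagger$, and $(\mathfrak{m}^t)^\dagger=t\mathfrak{m}^\dagger$ for $t\in\mathbb{R}$; (ii) $(\mathfrak{m}\mathfrak{n})'=\mathfrak{m}'\mathfrak{n}+\mathfrak{m}\mathfrak{n}'$; (iii) if $\mathfrak{m}\ne1$ then $\mathfrak{m}'\neq0$ and $\mathfrak{m}^\dagger\ne0$; (iv) if $\mathfrak{m}\prec1$ and $\mathfrak{n}\ne1$ then $\mathfrak{m}'\prec\mathfrak{n}^\dagger$; (v) if $\mathfrak{m}\prec\mathfrak{n}\ne1$ then $\mathfrak{m}'\prec\mathfrak{n}'$; (vi) if $\mathfrak{m}\in\mathfrak{L}_{<\alpha}$ then $\operatorname{supp}\mathfrak{m}'\subseteq\{\ell_\beta^\dagger:\beta<\alpha\}\,\mathfrak{m}$.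
   Context: Fix distinct symbols $\ell_\alpha$ for all ordinals. Exponent sequences $r=(r_\beta)$: reals over all ordinals, zero beyond some ordinal; monomials $\ell^r=\prod\ell_\beta^{r_\beta}$ form the abelian group $\mathfrak{L}$ ($\ell^r\ell^s=\ell^{r+s}$, $(\ell^r)^t=\ell^{tr}$), totally ordered by $\ell^r\prec\ell^s$ iff $r\ne s$ and $r_\beta<s_\beta$ at the least differing $\beta$; $\ell_\alpha$ has exponent $1$ at $\alpha$, else $0$. $\mathfrak{L}_{<\alpha}$: monomials with $r_\beta=0$ for $\beta\ge\alpha$. $\mathbb{L}_{<\alpha}=\mathbb{R}[[\mathfrak{L}_{<\alpha}]]$ is the Hahn field of real series over $\mathfrak{L}_{<\alpha}$ with well-based support, $\mathbb{L}=\bigcup\mathbb{L}_{<\alpha}$; for $f,g\in\mathbb{L}$, $f\prec g$ iff the largest monomial of $\operatorname{supp}f$ is $\prec$ that of $\operatorname{supp}g$ (with $0$ below all monomials). Define $\ell_\beta^\dagger=\prod_{\gamma\le\beta}\ell_\gamma^{-1}$ and for $\mathfrak{m}=\ell^r$: $\mathfrak{m}^\dagger=\sum_\beta r_\beta\ell_\beta^\dagger\in\mathbb{L}$ and $\mathfrak{m}'=\mathfrak{m}\,\mathfrak{m}^\dagger\in\mathbb{L}$. *)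

From HB Require Import structures.
From mathcomp Require Import all_boot all_order all_algebra.
From mathcomp Require Import boolp reals.
Set Implicit Arguments. Unset Strict Implicit. Unset Printing Implicit Defensive.
Import Order.TTheory GRing.Theory Num.Theory.
Local Open Scope ring_scope.

(* Ordinals are modelled by an arbitrary well-ordered type O.
   An exponent sequence r : O -> R represents the monomial l^r. *)
Section LogHyper.
Variables (R : realType) (d : Order.disp_t) (O : orderType d).

Definition mono := O -> R.

Definition mmul (r s : mono) : mono := fun b => r b + s b.
Definition mpow (r : mono) (t : R) : mono := fun b => t * r b.
Definition mone : mono := fun _ => 0.
Definition minv (r : mono) : mono := fun b => - r b.

Definition mlt (r s : mono) : Prop :=
  exists b : O, (forall g : O, (g < b)%O -> r g = s g) /\ r b < s b.

Definition ell (a : O) : mono := fun b => if b == a then 1 else 0.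

(* l_b^dagger = prod_{g <= b} l_g^{-1} *)
Definition ldag (b : O) : mono := fun g => if (g <= b)%O then -1 else 0.

Definition series := mono -> R.

Definition supp (f : series) : mono -> Prop := fun u => f u != 0.

Definition wellbased (S : mono -> Prop) : Prop :=
  forall T : mono -> Prop, (forall u, T u -> S u) -> (exists u, T u) ->
  exists u, T u /\ forall v, T v -> ~ mlt u v.

Definition hahn (f : series) : Prop := wellbased (supp f).

Definition sadd (f g : series) : series := fun u => f u + g u.
Definition sscale (t : R) (f : series) : series := fun u => t * f u.
Definition szero : series := fun _ => 0.
Definition smmul (m : mono) (f : series) : series := fun u => f (mmul u (minv m)).

Definition is_lead (f : series) (u : mono) : Prop :=
  supp f u /\ forall v, supp f v -> ~ mlt u v.

(* f \prec g for f, g in the Hahn field (0 lies below all monomials) *)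
Definition slt (f g : series) : Prop :=
  hahn f /\ hahn g /\
  exists v, is_lead g v /\ forall u, is_lead f u -> mlt u v.

(* m^dagger = sum_b r_b l_b^dagger  (the l_b^dagger are pairwise distinct) *)
Definition mdag (r : mono) : series := fun u =>
  match pselect (exists b, u = ldag b) with
  | left H => r (projT1 (cid H))
  | right _ => 0
  end.

Definition mder (r : mono) : series := smmul r (mdag r).

End LogHyper.

From HB Require Import structures.
From mathcomp Require Import all_boot all_order all_algebra.
From mathcomp Require Import boolp reals.
Import Order.TTheory GRing.Theory Num.Theory.
Local Open Scope ring_scope.

(* For m = l^r and a monomial z, the series m^dagger and m' = m m^dagger have support
   {l_b^dagger z : r_b <> 0}, with z = 1 and z = m respectively.  As b |-> l_b^dagger z
   is strictly decreasing and the ordinals are well-founded, such a support is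
   well-based and its largest monomial is l_b^dagger z for the least b with r_b <> 0.
   Items (iv) and (v) thereby become comparisons of two explicit monomials, settled at
   the first index where they differ. *)

Section LogHyperMonomials.
Set Implicit Arguments. Unset Strict Implicit.
Variables (R : realType) (d : Order.disp_t) (O : orderType d).
Local Notation mono := (mono R O).
Local Notation series := (series R O).
Local Notation mone := (@mone R d O).
Local Notation ldag := (@ldag R d O).
Local Notation szero := (@szero R d O).
Implicit Types (r s x y z w u v : mono) (f : series) (b c : O).

Lemma mmulC x y : mmul x y = mmul y x.
Proof. by apply: funext => b; rewrite /mmul addrC. Qed.

Lemma mmulx1 x : mmul x mone = x.
Proof. by apply: funext => b; rewrite /mmul /mone addr0. Qed.

Lemma mmulK x y : mmul (mmul x y) (minv y) = x.
Proof. by apply: funext => b; rewrite /mmul /minv addrK. Qed.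

Lemma mmulVK x y : mmul (mmul x (minv y)) y = x.
Proof. by apply: funext => b; rewrite /mmul /minv subrK. Qed.

Lemma minvM x y : minv (mmul x y) = mmul (minv x) (minv y).
Proof. by apply: funext => b; rewrite /mmul /minv opprD. Qed.

Lemma mlt_mul x y z w b :
  (forall c, (c < b)%O -> x c = y c) -> (forall c, (c < b)%O -> z c = w c) ->
  x b < y b -> z b <= w b -> mlt (mmul x z) (mmul y w).
Proof.
move=> exy ezw lt_xy le_zw; exists b; split; last exact: ltr_leD.
by move=> c cb; rewrite /mmul exy ?ezw.
Qed.

Lemma mlt_mul2r z x y : mlt (mmul x z) (mmul y z) <-> mlt x y.
Proof.
have mlt_mulr z' x' y' : mlt x' y' -> mlt (mmul x' z') (mmul y' z').
  by case=> b [exy lt_xy]; apply: (mlt_mul (b := b)).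
by split; [move/(mlt_mulr (minv z)); rewrite !mmulK | exact: mlt_mulr].
Qed.

Lemma ldag_inj : injective ldag.
Proof.
have N10 : (-1 : R) == 0 = false by rewrite oppr_eq0 oner_eq0.
move=> b c E; apply: le_anti; apply/andP; split.
  have := congr1 (@^~ b) E; rewrite /ldag lexx.
  by case: ifP => // _ /eqP; rewrite N10.
have := congr1 (@^~ c) E; rewrite /ldag lexx.
by case: ifP => // _ /esym/eqP; rewrite N10.
Qed.

Lemma mlt_ldag b c : mlt (ldag b) (ldag c) -> (c < b)%O.
Proof.
case=> g [_]; rewrite /ldag.
case: ifP => gb; case: ifP => gc; rewrite ?ltxx ?ltrN10 ?ltr0N1 // => _.
by apply: lt_le_trans gb; rewrite ltNge gc.
Qed.

Definition first_nz r b := r b != 0 /\ forall c, r c != 0 -> (b <= c)%O.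

Lemma first_nz_below r b c : first_nz r b -> (c < b)%O -> r c = 0.
Proof. by move=> [_ bmin] cb; apply/eqP; apply: contraTT cb => /bmin; rewrite leNgt. Qed.

Lemma first_nz_mlt1 r b : mlt r mone -> first_nz r b -> r b < 0.
Proof.
rewrite /mone => -[c [below lt_c]] [rb bmin].
have : (b <= c)%O by apply: bmin; rewrite ltr0_neq0.
rewrite le_eqVlt => /predU1P [-> //| bc].
by move: rb; rewrite below ?eqxx.
Qed.

Lemma mlt_first_nz r s b1 b2 : mlt r s -> first_nz r b1 -> first_nz s b2 ->
  mlt (mmul (ldag b1) r) (mmul (ldag b2) s).
Proof.
move=> [b [ers lt_rs]] fr fs; rewrite mmulC [mmul _ s]mmulC.
have b_le c : r c != s c -> (b <= c)%O.
  by move=> ne; rewrite leNgt; apply/negP => /ers/eqP; rewrite (negPf ne).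
(* Unless b1 = b2, the first difference b of r and s is at most min(b1, b2). *)
have eq_dag c : (c <= b)%O -> ldag b1 c = ldag b2 c.
  move=> cb; rewrite /ldag; case: (ltgtP b1 b2) => [lt12|lt21|-> //].
  - have bb1 : (b <= b1)%O by apply: b_le; rewrite (first_nz_below fs lt12) fr.1.
    by rewrite (le_trans cb bb1) (le_trans cb (le_trans bb1 (ltW lt12))).
  - have bb2 : (b <= b2)%O by apply: b_le; rewrite (first_nz_below fr lt21) eq_sym fs.1.
    by rewrite (le_trans cb bb2) (le_trans cb (le_trans bb2 (ltW lt21))).
apply: (mlt_mul (b := b)) => //; last by rewrite eq_dag.
by move=> c cb; apply: eq_dag; apply: ltW.
Qed.

Lemma neq_mone_exists_nz r : r <> mone -> exists b, r b != 0.
Proof.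
move=> r1; apply: contrapT => nz; apply: r1; apply: funext => b.
by apply/eqP; apply: contrapT => rb; apply: nz; exists b; apply/negP.
Qed.

Definition supp_ldag_shift f r z :=
  forall u, supp f u <-> exists2 b, u = mmul (ldag b) z & r b != 0.

Lemma mdag_ldag r b : mdag r (ldag b) = r b.
Proof.
rewrite /mdag; case: pselect => [H|[]]; last by exists b.
by case: (cid H) => c /= /ldag_inj ->.
Qed.

Lemma mdag_out r u : ~ (exists b, u = ldag b) -> mdag r u = 0.
Proof. by rewrite /mdag; case: pselect. Qed.

Lemma mdag_mul r s : mdag (mmul r s) = sadd (mdag r) (mdag s).
Proof.
apply: funext => u; rewrite /sadd.
have [[b ->]|nb] := pselect (exists b, u = ldag b); first by rewrite !mdag_ldag.
by rewrite !mdag_out // addr0.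
Qed.

Lemma mdag_pow r t : mdag (mpow r t) = sscale t (mdag r).
Proof.
apply: funext => u; rewrite /sscale.
have [[b ->]|nb] := pselect (exists b, u = ldag b); first by rewrite !mdag_ldag.
by rewrite !mdag_out // mulr0.
Qed.

Lemma smmulD x (f g : series) : smmul x (sadd f g) = sadd (smmul x f) (smmul x g).
Proof. by []. Qed.

Lemma smmul_mul x y f : smmul (mmul x y) f = smmul y (smmul x f).
Proof.
apply: funext => u; rewrite /smmul minvM.
by congr f; apply: funext => b; rewrite /mmul addrA addrAC.
Qed.

Lemma mder_mul r s : mder (mmul r s) = sadd (smmul s (mder r)) (smmul r (mder s)).
Proof. by rewrite /mder mdag_mul smmulD -!smmul_mul [mmul s r]mmulC. Qed.

Lemma supp_mdag r : supp_ldag_shift (mdag r) r mone.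
Proof.
move=> u; rewrite /supp; split => [|[b -> rb]]; last by rewrite mmulx1 mdag_ldag.
have [[b ->]|nb] := pselect (exists b, u = ldag b); last by rewrite mdag_out ?eqxx.
by rewrite mdag_ldag => rb; exists b; rewrite ?mmulx1.
Qed.

Lemma supp_mder r : supp_ldag_shift (mder r) r r.
Proof.
move=> u; rewrite -[supp _ u]/(supp (mdag r) (mmul u (minv r))) (supp_mdag r).
split=> [[b eu rb]|[b -> rb]]; exists b => //.
  by rewrite -(mmulVK u r) eu mmulx1.
by rewrite mmulK mmulx1.
Qed.

Lemma supp_ldag_shift_neq0 f r z : supp_ldag_shift f r z -> r <> mone -> f <> szero.
Proof.
move=> sf /neq_mone_exists_nz [b rb] f0.
have : supp f (mmul (ldag b) z) by apply/sf; exists b.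
by rewrite f0 /supp /szero eqxx.
Qed.

Lemma is_lead_supp_ldag_shift f r z b :
  supp_ldag_shift f r z -> first_nz r b -> is_lead f (mmul (ldag b) z).
Proof.
move=> sf [rb bmin]; split; first by apply/sf; exists b.
move=> _ /sf [c -> /bmin bc] /mlt_mul2r /mlt_ldag.
by rewrite ltNge bc.
Qed.

Section WellFounded.
Hypothesis wfO : well_founded (fun x y : O => (x < y)%O).

Lemma exists_least (P : O -> Prop) :
  (exists b, P b) -> exists b, P b /\ forall c, P c -> (b <= c)%O.
Proof.
move=> [b0 Pb0]; apply: contrapT => nleast; move: Pb0.
elim: (wfO b0) => {}b0 _ IH Pb0; apply: nleast; exists b0; split => // c Pc.
by rewrite leNgt; apply/negP => cb0; apply: IH Pc.
Qed.

Lemma exists_succ b c : (c < b)%O ->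
  exists g, [/\ (c < g)%O, (g <= b)%O & forall h, (h < g)%O -> (h <= c)%O].
Proof.
move=> cb; have [g [cg gmin]] := exists_least (ex_intro (fun g => (c < g)%O) b cb).
exists g; split => [//||h hg]; first exact: gmin.
by rewrite leNgt; apply/negP => /gmin; rewrite leNgt hg.
Qed.

Lemma ldag_lt b c : (c < b)%O -> mlt (ldag b) (ldag c).
Proof.
move=> /[dup] cb /exists_succ [g [cg gb gmin]]; exists g; split.
  by move=> h /gmin hc; rewrite /ldag hc (le_trans hc (ltW cb)).
by rewrite /ldag gb leNgt cg ltrN10.
Qed.

Lemma exists_first_nz r : r <> mone -> exists b, first_nz r b.
Proof. by move/neq_mone_exists_nz/exists_least. Qed.

(* The first nonzero exponent of r is negative; when c < b the two monomials first
   differ at the successor of c. *)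
Lemma mlt_first_nz_ldag r b c :
  mlt r mone -> first_nz r b -> mlt (mmul (ldag b) r) (ldag c).
Proof.
move=> r1 fr; have rb := first_nz_mlt1 r1 fr.
have below h : (h < b)%O -> r h = 0 by apply: first_nz_below.
case: (leP b c) => [bc|cb].
  rewrite mmulC -[ldag c]mmulx1 [mmul _ mone]mmulC.
  apply: (mlt_mul (b := b)) => [h /below //|h hb||].
  - by rewrite /ldag (ltW hb) (le_trans (ltW hb) bc).
  - exact: rb.
  - by rewrite /ldag lexx bc.
have [g [cg gb gmin]] := exists_succ cb.
rewrite -[ldag c]mmulx1; apply: (mlt_mul (b := g)).
- by move=> h /gmin hc; rewrite /ldag hc (le_trans hc (ltW cb)).
- by move=> h /gmin hc; rewrite below // (le_lt_trans hc cb).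
- by rewrite /ldag gb leNgt cg ltrN10.
- by move: gb; rewrite /mone le_eqVlt => /predU1P [-> |/below ->]; first exact: ltW.
Qed.

Lemma hahn_supp_ldag_shift f r z : supp_ldag_shift f r z -> hahn f.
Proof.
move=> sf T sub_Tf [u0 Tu0]; have [b0 eu0 rb0] := (sf u0).1 (sub_Tf _ Tu0).
rewrite eu0 in Tu0.
have [b [[rb Tb] bmin]] := exists_least
  (ex_intro (fun b => r b != 0 /\ T (mmul (ldag b) z)) b0 (conj rb0 Tu0)).
exists (mmul (ldag b) z); split => // v Tv.
have [c ev rc] := (sf v).1 (sub_Tf _ Tv).
rewrite ev => /mlt_mul2r /mlt_ldag.
by rewrite ltNge bmin // -ev.
Qed.

Lemma is_lead_supp_ldag_shiftP f r z u : supp_ldag_shift f r z -> is_lead f u ->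
  exists2 b, first_nz r b & u = mmul (ldag b) z.
Proof.
move=> sf [su umax]; have [b eu rb] := (sf u).1 su.
exists b => //; split => // c rc; rewrite leNgt; apply/negP => cb.
apply: (umax (mmul (ldag c) z)); first by apply/sf; exists c.
by rewrite eu mlt_mul2r; apply: ldag_lt.
Qed.

Lemma slt_supp_ldag_shift (f g : series) r s z w :
  supp_ldag_shift f r z -> supp_ldag_shift g s w -> s <> mone ->
  (forall b1 b2, first_nz r b1 -> first_nz s b2 ->
     mlt (mmul (ldag b1) z) (mmul (ldag b2) w)) ->
  slt f g.
Proof.
move=> sf sg s1 lt_lead; split; first exact: hahn_supp_ldag_shift sf.
split; first exact: hahn_supp_ldag_shift sg.
have [b2 fs] := exists_first_nz s1.
exists (mmul (ldag b2) w); split; first exact: is_lead_supp_ldag_shift.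
by move=> _ /(is_lead_supp_ldag_shiftP sf) [b1 fr ->]; apply: lt_lead.
Qed.

End WellFounded.
End LogHyperMonomials.

Theorem lemma3p1 (R : realType) (d : Order.disp_t) (O : orderType d)
  (wfO : well_founded (fun x y : O => (x < y)%O))
  (m n : mono R O) :
  (* (i) *)
  (mdag (mmul m n) = sadd (mdag m) (mdag n) /\
   forall t : R, mdag (mpow m t) = sscale t (mdag m)) /\
  (* (ii) *)
  mder (mmul m n) = sadd (smmul n (mder m)) (smmul m (mder n)) /\
  (* (iii) *)
  (m <> @mone R d O -> mder m <> @szero R d O /\ mdag m <> @szero R d O) /\
  (* (iv) *)
  (mlt m (@mone R d O) -> n <> @mone R d O -> slt (mder m) (mdag n)) /\
  (* (v) *)
  (mlt m n -> n <> @mone R d O -> slt (mder m) (mder n)) /\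
  (* (vi) *)
  (forall a : O, (forall b : O, (a <= b)%O -> m b = 0) ->
     forall u : mono R O, supp (mder m) u ->
       exists b : O, (b < a)%O /\ u = mmul (@ldag R d O b) m).
Proof.
split; first by split; [exact: mdag_mul | exact: mdag_pow].
split; first exact: mder_mul.
split.
  move=> m1; split; apply: supp_ldag_shift_neq0 m1.
    exact: supp_mder.
  exact: supp_mdag.
split.
  move=> m1 n1; apply: (slt_supp_ldag_shift wfO (supp_mder m) (supp_mdag n) n1).
  by move=> b1 b2 fm _; rewrite mmulx1; exact: mlt_first_nz_ldag.
split.
  move=> mn n1; apply: (slt_supp_ldag_shift wfO (supp_mder m) (supp_mder n) n1).
  by move=> b1 b2; exact: mlt_first_nz.
move=> a ma u /supp_mder [b -> mb]; exists b; split => //.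
by rewrite ltNge; apply: contra mb => /ma ->.
Qed.
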